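(* Let $c\in\mathbb{R}$, $\beta\geq0$, $q\in(0,1)$, $Q=q^2$ and $y=e^{-2\beta}$. Then $$Z_{\beta,q,c} = y^{1/2} + \sum_{\substack{L,R\geq0\\ L+R>0}}y^{L+R} \sum_{\substack{\ell_1,\dots,\ell_L\geq 1 \\ m_1,\dots,m_{R}\geq 1}}\prod_{j=1}^{L} \frac{Q^{\frac12 \ell_j(\ell_j-1)+c\ell_j+j\ell_j+\ell_{j-1}(\ell_{j}+\cdots+\ell_{L})}}{1-Q^{\ell_{j}+\cdots + \ell_{L}}}\prod_{j=1}^{R}\frac{Q^{\frac12 m_j(m_j-1)-cm_j+jm_j+m_{j-1}(m_{j}+\cdots+m_{R})}}{1-Q^{m_{j}+\cdots+m_{R}}}\Big(y^{-1/2} + \big(y^{1/2}-y^{-1/2}\big)Q^{\ell_1+\cdots+\ell_L}Q^{m_1+\cdots+m_R}\Big),$$ with the conventions $\ell_0=-1$, $m_0=0$.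
   Context: Spin configurations are $\sigma\in\{-1,+1\}^{\mathbb{Z}}$; $\mathcal{B}$ is the set of configurations for which there exist $a,b\in\mathbb{Z}$ with $\sigma_{a-i}=-1$ and $\sigma_{b+i}=+1$ for all $i\in\mathbb{N}$. With $H(\sigma)=\sum_{i\in\mathbb{Z}}\mathbb{1}_{\{\sigma_i\neq\sigma_{i+1}\}}$ (interaction $J(i)\equiv1$) and $f_c(\sigma)=2\sum_{i=1}^\infty(i-c)\mathbb{1}_{\{\sigma_i=-1\}}-2\sum_{i=-\infty}^0(i-c)\mathbb{1}_{\{\sigma_i=1\}}$, the partition function is $Z_{\beta,q,c}=\sum_{\sigma\in\mathcal{B}}e^{-\beta H(\sigma)}q^{f_c(\sigma)}$. In the sum, $L,R\geq 0$ with $L+R>0$, the $\ell_j,m_j$ range over positive integers, and empty products equal $1$. *)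

From HB Require Import structures.
From mathcomp Require Import all_boot all_order all_algebra.
From mathcomp Require Import all_classical all_reals all_analysis.
Set Implicit Arguments. Unset Strict Implicit. Unset Printing Implicit Defensive.
Import Order.TTheory GRing.Theory Num.Theory.
Local Open Scope classical_set_scope.
Local Open Scope ring_scope.

Section Defs.
Variable R : realType.

Definition spin_config := int -> int.

Definition configB : set spin_config :=
  [set s | (forall i, s i = -1 \/ s i = 1) /\
           exists a b : int, forall i : nat, s (a - i%:Z) = -1 /\ s (b + i%:Z) = 1].

Definition Ham (s : spin_config) : R :=
  \sum_(i \in [set: int]) ((s i != s (i + 1))%:R : R).

Definition fc (c : R) (s : spin_config) : R :=
  2 * (\sum_(i \in [set i : int | 1 <= i]) (i%:~R - c) * (s i == -1)%:R)
  - 2 * (\sum_(i \in [set i : int | i <= 0]) (i%:~R - c) * (s i == 1)%:R).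

Definition Zpart (beta q c : R) : \bar R :=
  \esum_(s in configB) (expR (- beta * Ham s) * q `^ fc c s)%:E.

(* For a finite sequence s = (s_1,...,s_n) (stored 0-indexed), with convention
   s_0 = s0 and parameter cc:
   prod_{j=1}^n Q^{1/2 s_j(s_j-1) + cc s_j + j s_j + s_{j-1}(s_j+...+s_n)}
              / (1 - Q^{s_j+...+s_n}). *)
Definition tailsum (s : seq nat) (k : nat) : nat := \sum_(k <= i < size s) nth 0%N s i.

Definition seq_factor (Q cc s0 : R) (s : seq nat) : R :=
  \prod_(k < size s)
    (let a : R := (nth 0%N s k)%:R in
     let t := tailsum s k in
     let prev : R := if (k : nat) == 0%N then s0 else (nth 0%N s k.-1)%:R in
     Q `^ (2^-1 * a * (a - 1) + cc * a + (k.+1)%:R * a + prev * t%:R)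
     / (1 - Q `^ t%:R)).

Definition pos_tuples (n : nat) : set (seq nat) :=
  [set s | size s = n /\ all (fun x => 0 < x)%N s].

End Defs.

From HB Require Import structures.
From mathcomp Require Import all_boot all_order all_algebra.
From mathcomp Require Import all_classical all_reals all_analysis.
From mathcomp Require Import zify ring lra.
Import Order.TTheory GRing.Theory Num.Theory.
Local Open Scope classical_set_scope.
Local Open Scope ring_scope.
Set Implicit Arguments. Unset Strict Implicit. Unset Printing Implicit Defensive.

(* A configuration of B is determined by its finitely many misaligned spins: +1 at
   sites i <= 0 and -1 at sites i >= 1.  Read outwards from the origin they form two
   finite words, each a sequence of runs of misaligned spins, of lengths l_1..l_L and
   m_1..m_R, separated by gaps.  The energy is 2(L+R)+1 when the sites 0 and 1 are both
   aligned and 2(L+R)-1 otherwise, while f_c is linear in the gap lengths; so for fixed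
   runs the sum over the gaps is a product of geometric series, and summing the gaps
   one after the other produces the factors of [seq_factor].  The aligned case is the
   image of lengthening both first gaps by one, which multiplies the weight by
   Q^(l_1+...+l_L) Q^(m_1+...+m_R); this gives the last factor of the formula. *)

Section RunsWord.
Local Open Scope nat_scope.

Definition all_pos (l : seq nat) := all (fun x => 0 < x) l.

(* [gapped_runs l g] is F^(g_1+1) T^(l_1) ... F^(g_L+1) T^(l_L); dropping its
   leading F gives [runs_word l g], whose first gap g_1 may thus be empty. *)
Fixpoint gapped_runs (l g : seq nat) : seq bool :=
  match l, g with
  | a :: l', x :: g' => nseq x.+1 false ++ nseq a true ++ gapped_runs l' g'
  | _, _ => [::]
  end.

Definition runs_word (l g : seq nat) := behead (gapped_runs l g).

Definition incr_head (g : seq nat) := if g is x :: g' then x.+1 :: g' else [::].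

Lemma runs_word_cons a l x g :
  runs_word (a :: l) (x :: g) = nseq x false ++ nseq a true ++ gapped_runs l g.
Proof. by []. Qed.

Lemma gapped_runsE l g : size g = size l ->
  gapped_runs l g = if l is [::] then [::] else false :: runs_word l g.
Proof. by case: l => [|a l]; case: g. Qed.

Lemma head_gapped_runs l g : head false (gapped_runs l g) = false.
Proof. by case: l => [|a l]; case: g. Qed.

Lemma last_runs_word l g : all_pos l -> size g = size l ->
  last false (runs_word l g) = (l != [::]).
Proof.
elim: l g => [|a l IH] [|x g] //= /andP[a_gt0 pl] [sg].
rewrite runs_word_cons !last_cat; case: l IH pl sg => [|b l] IH pl sg.
  by case: g sg => // _; case: a a_gt0 => //= a _; elim: a.
by rewrite (gapped_runsE sg) /= IH.
Qed.

Lemma runs_word_nil l g : all_pos l -> size g = size l ->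
  (runs_word l g == [::]) = (l == [::]).
Proof.
move=> pl sg; case: l pl sg => [|a l] pl sg; first by case: g sg.
by apply/eqP => E; have := last_runs_word pl sg; rewrite E.
Qed.

Lemma last_true_runs_word l g : all_pos l -> size g = size l ->
  last true (runs_word l g).
Proof.
move=> pl sg; have := last_runs_word pl sg; have := runs_word_nil pl sg.
by case: (runs_word l g) => [|b w] //= /esym/negbT l_nil ->.
Qed.

Lemma nseq_cat_inj (b : bool) n n' u u' : nseq n b ++ u = nseq n' b ++ u' ->
  head (~~ b) u = ~~ b -> head (~~ b) u' = ~~ b -> n = n' /\ u = u'.
Proof.
elim: n n' => [|n IH] [|n'] //=.
- by move=> -> /=; case: (b).
- by move=> <- _ /=; case: (b).
- by case=> /IH + hu hu' => /(_ hu hu') [-> ->].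
Qed.

Lemma gapped_runs_inj l g l' g' :
  all_pos l -> size g = size l -> all_pos l' -> size g' = size l' ->
  gapped_runs l g = gapped_runs l' g' -> l = l' /\ g = g'.
Proof.
elim: l g l' g' => [|a l IH] [|x g] [|a' l'] [|x' g'] //=.
move=> /andP[+ pl] [sg] /andP[+ pl'] [sg'].
case: a => // a _; case: a' => // a' _.
move=> /(@nseq_cat_inj false x.+1 x'.+1) /(_ erefl erefl) [[->]].
move=> /nseq_cat_inj /(_ (head_gapped_runs _ _) (head_gapped_runs _ _)) [->].
by move=> /(IH _ _ _ pl sg pl' sg') [-> ->].
Qed.

Lemma runs_word_inj l g l' g' :
  all_pos l -> size g = size l -> all_pos l' -> size g' = size l' ->
  runs_word l g = runs_word l' g' -> l = l' /\ g = g'.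
Proof.
move=> pl sg pl' sg' E; apply: gapped_runs_inj => //.
have := runs_word_nil pl sg; have := runs_word_nil pl' sg'.
rewrite (gapped_runsE sg) (gapped_runsE sg') E.
by case: l {pl sg E} => [|a l]; case: l' {pl' sg'} => [|a' l'] // -> //= ->.
Qed.

Lemma runs_word_incr_head l g : runs_word l (incr_head g) = gapped_runs l g.
Proof. by case: l => [|a l]; case: g. Qed.

Lemma size_incr_head g : size (incr_head g) = size g.
Proof. by case: g. Qed.

Lemma incr_head_inj : injective incr_head.
Proof. by case=> [|x g] [|x' g'] //= [-> ->]. Qed.

Lemma incr_head_onto l g : all_pos l -> size g = size l -> ~~ head false (runs_word l g) ->
  exists2 g', size g' = size l & incr_head g' = g.
Proof.
case: l => [|a l] pl sg; first by case: g sg; exists [::].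
case: g sg => [|[|x] g] // sg; last by exists (x :: g).
by move: pl => /andP[a_gt0 _]; rewrite runs_word_cons; case: a a_gt0 sg.
Qed.

Lemma runs_word_surj w : last true w ->
  exists l g, [/\ all_pos l, size g = size l & runs_word l g = w].
Proof.
elim: w => [|b w IH] last_w; first by exists [::], [::].
have {IH} [l [g [pl sg Ew]]] : exists l g, [/\ all_pos l, size g = size l & runs_word l g = w].
  by apply: IH; case: w last_w.
subst w.
case: b last_w => [_|last_w].
  case: l g pl sg => [|a l] [|x g] //= pl sg; first by exists [:: 1], [:: 0].
  move: pl; rewrite /all_pos /= => /andP[a_gt0 pl]; case: x => [|x].
    by exists (a.+1 :: l), (0 :: g); rewrite /all_pos /= pl sg.
  by exists (1 :: a :: l), (0 :: x :: g); rewrite /all_pos /= a_gt0 pl sg.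
case: l g pl sg last_w => [|a l] [|x g] //= pl sg _.
by exists (a :: l), (x.+1 :: g).
Qed.

Lemma count_runs_word l g : size g = size l -> count id (runs_word l g) = sumn l.
Proof.
have count_gapped k h : size h = size k -> count id (gapped_runs k h) = sumn k.
  elim: k h => [|a k IH] [|x h] //= [/IH sh].
  by rewrite !count_cat !count_nseq /= sh mul0n add0n mul1n.
move=> sg; rewrite -(count_gapped _ _ sg) (gapped_runsE sg).
by case: l sg => [|a l] sg.
Qed.

Fixpoint walls (w : seq bool) : nat :=
  if w is b :: w' then (b != head false w') + walls w' else 0.

Lemma walls_nseq_cat n b v :
  walls (nseq n.+1 b ++ v) = (b != head false v) + walls v.
Proof. by elim: n => //= n ->; rewrite eqxx. Qed.

Lemma walls_runs_word l g : all_pos l -> size g = size l ->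
  walls (runs_word l g) + head false (runs_word l g) = (size l).*2.
Proof.
have walls_gapped k h : all_pos k -> size h = size k ->
    walls (gapped_runs k h) = (size k).*2.
  elim: k h => [|a k IH] [|x h] // /andP[+ pk] [sh].
  case: a => // a _.
  by rewrite walls_nseq_cat walls_nseq_cat /= head_gapped_runs IH.
move=> pl sg; rewrite -(walls_gapped _ _ pl sg) (gapped_runsE sg).
case: l pl sg => [|a l] pl sg; first by case: g sg.
by rewrite /= addnC; case: (head false _).
Qed.

Lemma walls_big w n : size w <= n ->
  walls w = \sum_(k < n) (nth false w k != nth false w k.+1).
Proof.
elim: w n => [|b w IH] n /=.
  by move=> _; rewrite big1 // => k _; rewrite !nth_nil.
by case: n => // n; rewrite ltnS => /IH ->; rewrite big_ord_recl /= nth0.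
Qed.

Lemma walls_runs_word_pair l gl m gm : all_pos l -> all_pos m ->
  size gl = size l -> size gm = size m ->
  let hl := head false (runs_word l gl) in let hr := head false (runs_word m gm) in
  walls (runs_word l gl) + walls (runs_word m gm) + (hl == hr) + (hl || hr).*2 =
  (size l + size m).*2.+1.
Proof.
move=> pl pm sl sm /=.
have := walls_runs_word pl sl; have := walls_runs_word pm sm.
by case: (head false _); case: (head false _) => /=; lia.
Qed.

End RunsWord.

Section PositionSum.
Variable R : numFieldType.

Fixpoint pos_sum (a : R) (w : seq bool) : R :=
  if w is b :: w' then b%:R * a + pos_sum (a + 1) w' else 0.

Lemma pos_sum_cat a u v :
  pos_sum a (u ++ v) = pos_sum a u + pos_sum (a + (size u)%:R) v.
Proof.
elim: u a => [|b u IH] a /=; first by rewrite addr0 add0r.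
by rewrite IH addrA; congr (_ + pos_sum _ _); rewrite -natr1; ring.
Qed.

Lemma pos_sum_shift a d w : pos_sum (a + d) w = pos_sum a w + d * (count id w)%:R.
Proof.
elim: w a => [|b w IH] a /=; first by rewrite mulr0 addr0.
by rewrite addrAC IH natrD; ring.
Qed.

Lemma pos_sum_nseq_false a n : pos_sum a (nseq n false) = 0.
Proof. by elim: n a => [|n IH] a //=; rewrite IH mul0r addr0. Qed.

Lemma pos_sum_nseq_true a n :
  pos_sum a (nseq n true) = n%:R * a + n%:R * (n%:R - 1) / 2.
Proof.
elim: n a => [|n IH] a /=; first by rewrite !mul0r addr0.
by rewrite IH -natr1; field.
Qed.

Lemma pos_sum_big a w n : (size w <= n)%N ->
  pos_sum a w = \sum_(k < n) (nth false w k)%:R * (k%:R + a).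
Proof.
elim: w a n => [|b w IH] a n /=.
  by move=> _; rewrite big1 // => k _; rewrite nth_nil mul0r.
case: n => // n; rewrite ltnS => /IH ->; rewrite big_ord_recl /= add0r.
by congr (_ + _); apply: eq_bigr => k _; rewrite add0n /bump leq0n add1n -natr1 addrA addrAC.
Qed.

Lemma pos_sum_gapped_runs (b : R) l g : size g = size l ->
  pos_sum b (gapped_runs l g) = pos_sum (b + 1) (runs_word l g).
Proof.
move=> sg; rewrite (gapped_runsE sg); case: l sg => [|a l] sg; first by case: g sg.
by rewrite /= mul0r add0r.
Qed.

Definition run_exponent (cc s0 : R) (a t : nat) : R :=
  2^-1 * a%:R * (a%:R - 1) + cc * a%:R + 1 * a%:R + s0 * t%:R.

Lemma pos_sum_runs_word_cons (cc s0 : R) a l x g : size g = size l ->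
  pos_sum (cc + s0 + 1) (runs_word (a :: l) (x :: g)) =
  run_exponent cc s0 a (a + sumn l) + x%:R * (a + sumn l)%:R +
  pos_sum (cc + 1 + a%:R + 1) (runs_word l g).
Proof.
move=> sg; rewrite /run_exponent runs_word_cons !pos_sum_cat pos_sum_nseq_false pos_sum_nseq_true.
rewrite pos_sum_gapped_runs // !size_nseq add0r.
rewrite (_ : cc + s0 + 1 + x%:R + a%:R + 1 = (cc + 1 + a%:R + 1) + (s0 + x%:R)); last by ring.
rewrite pos_sum_shift count_runs_word // natrD.
by set E := pos_sum _ _; field.
Qed.

Lemma pos_sum_runs_word_incr_head (b : R) l g : size g = size l ->
  pos_sum b (runs_word l (incr_head g)) = pos_sum b (runs_word l g) + (sumn l)%:R.
Proof.
move=> sg; rewrite runs_word_incr_head pos_sum_gapped_runs // pos_sum_shift.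
by rewrite count_runs_word // mul1r.
Qed.

End PositionSum.

Lemma int_pos_or_nonpos (i : int) :
  (exists k : nat, i = k.+1%:Z) \/ (exists k : nat, i = - k%:Z).
Proof.
case: i => [[|k]|k]; first by right; exists 0%N.
  by left; exists k.
by right; exists k.+1; rewrite NegzE.
Qed.

Lemma fsbig_int_window (V : nmodType) (A : set int) (F : int -> V) n :
  (forall k, (n <= k)%N ->
     (- k%:Z \in A -> F (- k%:Z) = 0) /\ (k.+1%:Z \in A -> F k.+1%:Z = 0)) ->
  \sum_(i \in A) F i =
  \sum_(k < n | - k%:Z \in A) F (- k%:Z) + \sum_(k < n | k.+1%:Z \in A) F k.+1%:Z.
Proof.
move=> F_out.
set r := [seq - k%:Z | k <- iota 0 n] ++ [seq k.+1%:Z | k <- iota 0 n].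
have r_uniq : uniq r.
  have inj_neg : injective (fun k : nat => - k%:Z) by move=> k j /oppr_inj [].
  have inj_pos : injective (fun k : nat => k.+1%:Z) by move=> k j [].
  rewrite cat_uniq !map_inj_uniq // iota_uniq andbT andTb.
  by apply/hasPn => _ /mapP [k _ ->]; apply/mapP => -[j _] /eqP; lia.
have unlisted (f : nat -> int) k : f k \notin [seq f j | j <- iota 0 n] -> (n <= k)%N.
  by rewrite leqNgt; apply: contra => kn; apply: map_f; rewrite mem_iota.
have iota0 : iota 0 n = index_iota 0 n by rewrite /index_iota subn0.
rewrite fsbig_mkcond (fsbigE r) //; last first.
  move=> i _; rewrite mem_cat negb_or => /andP[i_neg i_pos].
  rewrite /patch; case: ifP => // iA.
  case: (int_pos_or_nonpos i) => -[k ik]; subst i.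
    by move: i_pos => /(unlisted (fun j => j.+1%:Z)) /F_out [_ /(_ iA)].
  by move: i_neg => /(unlisted (fun j => - j%:Z)) /F_out [/(_ iA)].
rewrite big_cat !big_map iota0 !big_mkord.
rewrite (big_mkcond (fun k : 'I_n => - k%:Z \in A)).
rewrite (big_mkcond (fun k : 'I_n => k.+1%:Z \in A)).
by congr (_ + _); apply: eq_big => // k; rewrite in_setT.
Qed.

Definition spin_of (b : bool) : int := if b then 1 else -1.

Lemma spin_of_inj : injective spin_of. Proof. by case; case. Qed.

Lemma spin_of_eq1 b : (spin_of b == 1) = b. Proof. by case: b. Qed.

Lemma spin_of_eqN1 b : (spin_of b == -1) = ~~ b. Proof. by case: b. Qed.

(* [wl] lists the sites 0, -1, -2, ... and [wr] the sites 1, 2, ...; a letter [true]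
   marks a spin differing from the boundary value (-1 on the left, +1 on the right). *)
Definition spins (wl wr : seq bool) : spin_config := fun i =>
  if 0 < i then spin_of (~~ nth false wr (absz i).-1) else spin_of (nth false wl (absz i)).

Lemma spins_pos wl wr (k : nat) : spins wl wr k.+1%:Z = spin_of (~~ nth false wr k).
Proof. by []. Qed.

Lemma spins_nonpos wl wr (k : nat) : spins wl wr (- k%:Z) = spin_of (nth false wl k).
Proof. by rewrite /spins abszN; case: ifP => //; lia. Qed.

Lemma spins_pos_succ wl wr (k : nat) :
  spins wl wr (k.+1%:Z + 1) = spin_of (~~ nth false wr k.+1).
Proof. by rewrite -(spins_pos wl); congr (spins _ _ _); lia. Qed.

Lemma spins_nonpos_succ wl wr (k : nat) :
  spins wl wr (- k.+1%:Z + 1) = spin_of (nth false wl k).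
Proof. by rewrite -(spins_nonpos wl wr); congr (spins _ _ _); lia. Qed.

Fixpoint trim_false (w : seq bool) : seq bool :=
  if w is b :: w' then
    if b || (trim_false w' != [::]) then b :: trim_false w' else [::]
  else [::].

Lemma nth_trim_false w k : nth false (trim_false w) k = nth false w k.
Proof.
elim: w k => [|b w IH] k //=.
case: ifP => [_|/norP [/negbTE -> /negPn /eqP trim_nil]]; first by case: k.
by case: k => //= k; rewrite -IH trim_nil nth_nil.
Qed.

Lemma last_trim_false w : last true (trim_false w).
Proof.
elim: w => [|b w IH] //=.
by case: ifP => // /orP [->|]; case: (trim_false w) IH.
Qed.

Lemma eq_from_nth_last_true u v : last true u -> last true v ->
  (forall k, nth false u k = nth false v k) -> u = v.
Proof.
have size_le u' v' : last true v' -> (forall k, nth false u' k = nth false v' k) ->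
    (size v' <= size u')%N.
  move=> last_v' nth_uv; rewrite leqNgt; apply/negP => lt_uv.
  case: v' last_v' nth_uv lt_uv => // b v' last_v' nth_uv lt_uv.
  move: last_v'; rewrite [last _ _]/= -[last b v']/(last false (b :: v')).
  by rewrite -nth_last -nth_uv nth_default.
move=> last_u last_v nth_uv; apply: (@eq_from_nth _ false) => [|k _]; last exact: nth_uv.
by apply/eqP; rewrite eqn_leq !size_le.
Qed.

Lemma configB_spins wl wr : configB (spins wl wr).
Proof.
split.
  move=> i; case: (int_pos_or_nonpos i) => -[k ->].
    by rewrite spins_pos; case: (nth _ _ _); [left|right].
  by rewrite spins_nonpos; case: (nth _ _ _); [right|left].
exists (- (size wl)%:Z), (size wr).+1%:Z => i; split.
  have -> : - (size wl)%:Z - i%:Z = - (size wl + i)%N%:Z by lia.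
  by rewrite spins_nonpos nth_default // leq_addr.
have -> : (size wr).+1%:Z + i%:Z = (size wr + i)%N.+1%:Z by lia.
by rewrite spins_pos nth_default // leq_addr.
Qed.

Lemma spins_inj wl wr wl' wr' :
  last true wl -> last true wr -> last true wl' -> last true wr' ->
  spins wl wr = spins wl' wr' -> wl = wl' /\ wr = wr'.
Proof.
move=> last_l last_r last_l' last_r' E; split; apply: eq_from_nth_last_true => // k.
  by apply: spin_of_inj; rewrite -(spins_nonpos wl wr) -(spins_nonpos wl' wr') E.
by apply: (can_inj negbK); apply: spin_of_inj; rewrite -(spins_pos wl) -(spins_pos wl') E.
Qed.

Lemma spins_surj s : configB s ->
  exists wl wr, [/\ last true wl, last true wr & spins wl wr = s].
Proof.
move=> [s_pm [a [b s_ends]]].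
set N := (`|a| + `|b|)%N.
have s_right k : (N <= k)%N -> s k.+1%:Z = 1.
  move=> kN; have := (s_ends (absz (k.+1%:Z - b))).2.
  by rewrite (_ : b + _ = k.+1%:Z) //; lia.
have s_left k : (N <= k)%N -> s (- k%:Z) = -1.
  move=> kN; have := (s_ends (absz (a + k%:Z))).1.
  by rewrite (_ : a - _ = - k%:Z) //; lia.
exists (trim_false (mkseq (fun k => s (- k%:Z) == 1) N)).
exists (trim_false (mkseq (fun k => s k.+1%:Z == -1) N)).
split; try exact: last_trim_false.
apply: funext => i; case: (int_pos_or_nonpos i) => -[k ->].
  rewrite spins_pos nth_trim_false.
  case: (ltnP k N) => kN; last by rewrite nth_default ?size_mkseq ?s_right.
  by rewrite nth_mkseq //; case: (s_pm k.+1%:Z) => ->.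
rewrite spins_nonpos nth_trim_false.
case: (ltnP k N) => kN; last by rewrite nth_default ?size_mkseq ?s_left.
by rewrite nth_mkseq //; case: (s_pm (- k%:Z)) => ->.
Qed.

Section SpinEnergies.
Variable R : realType.

Lemma Ham_spins wl wr :
  Ham R (spins wl wr) = (walls wl + walls wr + (head false wl == head false wr))%:R.
Proof.
set n := (size wl + size wr).+1.
have spins_out k : (n <= k)%N ->
    spins wl wr (- k%:Z) = spins wl wr (- k%:Z + 1) /\
    spins wl wr k.+1%:Z = spins wl wr (k.+1%:Z + 1).
  case: k => [//|k]; rewrite /n => kn.
  rewrite spins_nonpos spins_nonpos_succ spins_pos spins_pos_succ.
  by rewrite !nth_default //; lia.
rewrite /Ham (fsbig_int_window (n := n)) => [|k /spins_out [-> ->]]; last by rewrite !eqxx.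
rewrite (eq_bigl xpredT) => [|k]; last by rewrite /= in_setT.
rewrite [X in _ + X](eq_bigl xpredT) => [|k]; last by rewrite /= in_setT.
rewrite big_ord_recl -!natr_sum -!natrD; congr (_%:R).
rewrite (@walls_big wl n.-1) ?leq_addr // (@walls_big wr n) ?leqW ?leq_addl //.
have -> : (spins wl wr (- 0%:Z) != spins wl wr (- 0%:Z + 1)) = (head false wl == head false wr).
  rewrite (spins_nonpos _ _ 0) (spins_pos _ _ 0) (inj_eq spin_of_inj) !nth0.
  by case: (head _ _); case: (head _ _).
under eq_bigr do rewrite lift0 spins_nonpos spins_nonpos_succ (inj_eq spin_of_inj) eq_sym.
under [X in _ + X = _]eq_bigr do
  rewrite spins_pos spins_pos_succ (inj_eq spin_of_inj) (inj_eq (can_inj negbK)).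
by rewrite [RHS]addnC [RHS]addnA.
Qed.

Lemma fc_spins (c : R) wl wr : fc c (spins wl wr) = 2 * (pos_sum (1 - c) wr + pos_sum c wl).
Proof.
set n := (size wl + size wr).+1.
have pos_part : \sum_(i \in [set i : int | 1 <= i]) (i%:~R - c) * (spins wl wr i == -1)%:R
                = pos_sum (1 - c) wr.
  rewrite (fsbig_int_window (n := n)) => [|k kn]; last first.
    split=> [/set_mem /=|_]; first by lia.
    by rewrite spins_pos spin_of_eqN1 negbK nth_default ?mulr0 //; move: kn; rewrite /n; lia.
  rewrite big_pred0 => [|k]; last by apply/negbTE/negP => /set_mem /=; lia.
  rewrite add0r (eq_bigl xpredT) => [|k]; last by apply/mem_set => /=; lia.
  rewrite (@pos_sum_big _ _ wr n) ?leqW ?leq_addl //; apply: eq_bigr => k _.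
  by rewrite spins_pos spin_of_eqN1 negbK -pmulrn -natr1; ring.
have nonpos_part : \sum_(i \in [set i : int | i <= 0]) (i%:~R - c) * (spins wl wr i == 1)%:R
                   = - pos_sum c wl.
  rewrite (fsbig_int_window (n := n)) => [|k kn]; last first.
    split=> [_|/set_mem /=]; last by lia.
    by rewrite spins_nonpos spin_of_eq1 nth_default ?mulr0 //; move: kn; rewrite /n; lia.
  rewrite [X in _ + X]big_pred0 => [|k]; last by apply/negbTE/negP => /set_mem /=; lia.
  rewrite addr0 (eq_bigl xpredT) => [|k]; last by apply/mem_set => /=; lia.
  rewrite (@pos_sum_big _ _ wl n) ?leqW ?leq_addr // -sumrN; apply: eq_bigr => k _.
  by rewrite spins_nonpos spin_of_eq1 mulrNz -pmulrn; ring.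
by rewrite /fc pos_part nonpos_part; ring.
Qed.

End SpinEnergies.

Section ExtendedSums.
Variable R : realType.
Local Open Scope ereal_scope.

Lemma esumZl (T : choiceType) (I : set T) (r : R) (a : T -> \bar R) :
  (0 <= r)%R -> (forall i, I i -> 0 <= a i) ->
  \esum_(i in I) (r%:E * a i) = r%:E * \esum_(i in I) a i.
Proof.
move=> r_ge0 a_ge0; rewrite esum_mkcond [in RHS]esum_mkcond.
set b := fun i => if i \in I then a i else 0.
have b_ge0 i : 0 <= b i by rewrite /b; case: ifP => // /set_mem /a_ge0.
have -> : (fun i => if i \in I then r%:E * a i else 0) = (fun i => r%:E * b i).
  by apply: funext => i; rewrite /b; case: ifP; rewrite ?mule0.
rewrite /esum -ereal_supZl //; last first.
  by apply/set0P; exists (\sum_(x \in set0) b x); exists set0 => //; exact: fsets_set0.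
rewrite image_comp; congr ereal_sup; apply: eq_imagel => A _ /=.
by rewrite ge0_mule_fsumr.
Qed.

Lemma esum_geometric (a r : R) : (0 <= a)%R -> (0 <= r < 1)%R ->
  \esum_(k in [set: nat]) (a * r ^+ k)%:E = (a / (1 - r))%:E.
Proof.
move=> a_ge0 /andP[r_ge0 r_lt1]; have r_norm : (`|r| < 1)%R by rewrite ger0_norm.
rewrite -nneseries_esumT => [|k]; last by rewrite lee_fin mulr_ge0 // exprn_ge0.
under eq_fun do rewrite sumEFin.
rewrite (_ : (fun _ => _) = EFin \o series (geometric a r)) //.
rewrite EFin_lim; last exact: is_cvg_geometric_series.
have /(@cvg_unique _ (@Rhausdorff R)) := @cvg_geometric_series _ a r r_norm.
by move=> /(_ _ (@is_cvg_geometric_series _ a r r_norm)) <-.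
Qed.

Lemma esum_mul_setX (T1 T2 : choiceType) (A : set T1) (B : set T2)
    (f : T1 -> R) (h : T2 -> R) (F H : R) :
  (forall x, A x -> 0 <= f x)%R -> (forall y, B y -> 0 <= h y)%R ->
  \esum_(x in A) (f x)%:E = F%:E -> \esum_(y in B) (h y)%:E = H%:E ->
  \esum_(z in A `*` B) (f z.1 * h z.2)%:E = (F * H)%:E.
Proof.
move=> f_ge0 h_ge0 sum_f sum_h.
have H_ge0 : (0 <= H)%R by rewrite -lee_fin -sum_h esum_ge0 // => y /h_ge0.
rewrite -(@esum_esum _ _ _ A (fun=> B) (fun x y => (f x * h y)%:E)); last first.
  by move=> x y /f_ge0 ? /h_ge0 ?; rewrite lee_fin mulr_ge0.
transitivity (\esum_(x in A) (H%:E * (f x)%:E)).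
  apply: eq_esum => x /f_ge0 fx_ge0.
  under eq_esum do rewrite EFinM.
  by rewrite esumZl ?sum_h 1?muleC // => y /h_ge0; rewrite lee_fin.
by rewrite esumZl ?sum_f -?EFinM 1?mulrC // => x /f_ge0; rewrite lee_fin.
Qed.

Lemma esum_seq_cons (T : choiceType) n (f : seq T -> \bar R) :
  (forall s, 0 <= f s) ->
  \esum_(s in [set s : seq T | size s = n.+1]) f s =
  \esum_(x in [set: T]) \esum_(s in [set s : seq T | size s = n]) f (x :: s).
Proof.
move=> f_ge0; rewrite (@esum_esum _ _ _ _ (fun=> [set s | size s = n]) (fun x s => f (x :: s))) //.
rewrite (reindex_esum ([set: T] `*`` fun=> [set s | size s = n]) _ (fun p => p.1 :: p.2)) //.
split.
- by move=> [x s] [_ /= ->].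
- by move=> [x s] [x' s'] _ _ [-> ->].
- by move=> [|x s] //= [sn]; exists (x, s).
Qed.

End ExtendedSums.

Lemma tailsum0 s : tailsum s 0 = sumn s.
Proof. by rewrite sumnE (big_nth 0). Qed.

Lemma tailsum_consS a l k : tailsum (a :: l) k.+1 = tailsum l k.
Proof. by rewrite /tailsum big_add1. Qed.

Section GapSums.
Variable R : realType.

Definition gaps (l : seq nat) := [set g : seq nat | size g = size l].

Lemma gt0_powRD (x r s : R) : 0 < x -> x `^ (r + s) = x `^ r * x `^ s.
Proof. by move=> x_gt0; rewrite powRD // (gt_eqF x_gt0) implybT. Qed.

Lemma powRM_natl (x t : R) n : 0 <= x -> x `^ (n%:R * t) = (x `^ t) ^+ n.
Proof. by move=> x_ge0; rewrite mulrC powRrM powR_mulrn // powR_ge0. Qed.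

Lemma seq_factor_cons (Q cc s0 : R) a l :
  seq_factor Q cc s0 (a :: l) =
  Q `^ run_exponent cc s0 a (a + sumn l) / (1 - Q `^ (a + sumn l)%:R) *
  seq_factor Q (cc + 1) a%:R l.
Proof.
rewrite /seq_factor /= big_ord_recl /= tailsum0 /=; congr (_ * _).
apply: eq_bigr => i _; rewrite /bump /= add1n tailsum_consS.
have -> : (nth 0%N (a :: l) i)%:R =
          (if (i : nat) == 0%N then a%:R else (nth 0%N l i.-1)%:R :> R).
  by case: (nat_of_ord i).
congr (Q `^ _ / _); rewrite -[i.+2%:R]natr1.
by set prev := (if _ then _ else _) * _; ring.
Qed.

(* The first gap contributes a geometric series of ratio [Q ^ (a + sumn l)]; the other
   gaps give the same sum for [l], with parameters [cc + 1] and [a]. *)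
Lemma esum_gaps_seq_factor (Q cc s0 : R) l : 0 < Q < 1 -> all_pos l ->
  \esum_(g in gaps l) (Q `^ pos_sum (cc + s0 + 1) (runs_word l g))%:E =
  (seq_factor Q cc s0 l)%:E.
Proof.
move=> /andP[Q_gt0 Q_lt1]; elim: l cc s0 => [|a l IH] cc s0.
  rewrite (_ : gaps [::] = [set [::]]); last by apply/seteqP; split=> g /= => [/size0nil|->].
  by rewrite esum_set1 ?lee_fin ?powR_ge0 // /seq_factor big_ord0 powRr0.
move=> /andP[a_gt0 pl]; rewrite /gaps /= esum_seq_cons => [|g]; last by rewrite lee_fin powR_ge0.
pose K := Q `^ run_exponent cc s0 a (a + sumn l); pose r := Q `^ (a + sumn l)%:R.
set sf := seq_factor Q (cc + 1) a%:R l.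
have sf_ge0 : 0 <= sf by rewrite -lee_fin -IH // esum_ge0 // => g _; rewrite lee_fin powR_ge0.
have r_lt1 : r < 1.
  by rewrite /r powR_mulrn ?ltW // exprn_ilt1 ?ltW // -lt0n addn_gt0 a_gt0.
transitivity (\esum_(x in [set: nat]) (sf * K * r ^+ x)%:E).
  apply: eq_esum => x _; rewrite -mulrA mulrC EFinM -IH // -esumZl; first last.
  - by move=> g _; rewrite lee_fin powR_ge0.
  - by rewrite mulr_ge0 ?exprn_ge0 ?powR_ge0.
  apply: eq_esum => g sg; rewrite -EFinM pos_sum_runs_word_cons //.
  by rewrite gt0_powRD // [Q `^ (_ + x%:R * _)]gt0_powRD // powRM_natl ?ltW.
rewrite esum_geometric ?mulr_ge0 ?powR_ge0 ?r_lt1 //.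
by rewrite seq_factor_cons -/K -/r -/sf; congr (_%:E); ring.
Qed.

End GapSums.

Definition aligned_at_origin (l m : seq nat) : set (seq nat * seq nat) :=
  [set gg | ~~ head false (runs_word l gg.1) && ~~ head false (runs_word m gg.2)].

Lemma incr_heads_bij l m : all_pos l -> all_pos m ->
  set_bij (gaps l `*` gaps m) (gaps l `*` gaps m `&` aligned_at_origin l m)
    (fun gg => (incr_head gg.1, incr_head gg.2)).
Proof.
move=> pl pm; split.
- move=> [g1 g2] [/= s1 s2]; rewrite /gaps /aligned_at_origin /= !size_incr_head.
  by rewrite !runs_word_incr_head !head_gapped_runs.
- by move=> [g1 g2] [g1' g2'] _ _ /= [/incr_head_inj -> /incr_head_inj ->].
- move=> [g1 g2] [[/= s1 s2]]; rewrite /aligned_at_origin /= => /andP[h1 h2].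
  have [g1' s1' <-] := incr_head_onto pl s1 h1.
  have [g2' s2' <-] := incr_head_onto pm s2 h2.
  by exists (g1', g2').
Qed.

Section BoltzmannWeight.
Variable R : realType.

Lemma expR_Ham_spins_runs (beta : R) l gl m gm : all_pos l -> all_pos m ->
  size gl = size l -> size gm = size m ->
  let y := expR (- (2 * beta)) in
  expR (- beta * Ham R (spins (runs_word l gl) (runs_word m gm))) =
  y ^+ (size l + size m) *
  y `^ (if head false (runs_word l gl) || head false (runs_word m gm) then - 2^-1 else 2^-1).
Proof.
move=> pl pm sl sm y; have := walls_runs_word_pair pl pm sl sm.
rewrite /= Ham_spins /y -expRM_natr -expRM -expRD.
move: (head false _) (head false _) => hr hl walls_eq; congr expR.
move: walls_eq => /(congr1 (fun k : nat => k%:R : R)).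
rewrite natrD -natr1 -!muln2 !natrM.
by case: (hl || hr) => /= walls_eq; nra.
Qed.

Lemma powR_fc_spins (c q : R) wl wr : 0 < q ->
  q `^ fc c (spins wl wr) = (q ^+ 2) `^ pos_sum c wl * (q ^+ 2) `^ pos_sum (1 - c) wr.
Proof.
move=> q_gt0; rewrite fc_spins powRrM powR_mulrn ?ltW //.
by rewrite gt0_powRD ?exprn_gt0 // mulrC.
Qed.

End BoltzmannWeight.

Definition boltzmann (R : realType) (beta q c : R) (s : spin_config) : R :=
  expR (- beta * Ham R s) * q `^ fc c s.

Definition run_weight (R : realType) (c beta q : R) (l m : seq nat) : R :=
  let Q := q ^+ 2 in let y := expR (- (2 * beta)) in
  y ^+ (size l + size m) * seq_factor Q c (-1) l * seq_factor Q (- c) 0 m *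
  (y `^ (- 2^-1) + (y `^ (2^-1) - y `^ (- 2^-1)) * Q `^ (sumn l)%:R * Q `^ (sumn m)%:R).

Section GapPairSums.
Variables (R : realType) (c beta q : R) (l m : seq nat).
Hypotheses (q01 : 0 < q < 1) (pl : all_pos l) (pm : all_pos m).

Let Q := q ^+ 2.
Let gap_weight (gg : seq nat * seq nat) :=
  Q `^ pos_sum c (runs_word l gg.1) * Q `^ pos_sum (1 - c) (runs_word m gg.2).
Let X := seq_factor Q c (-1) l * seq_factor Q (- c) 0 m.
Let S := Q `^ (sumn l)%:R * Q `^ (sumn m)%:R.

Let Q_gt0 : 0 < Q.
Proof. by case/andP: q01 => q_gt0 _; rewrite exprn_gt0. Qed.

Let Q01 : 0 < Q < 1.
Proof. by case/andP: q01 => q_gt0 q_lt1; rewrite Q_gt0 expr_lt1 ?ltW. Qed.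

Let gap_weight_ge0 gg : (0 <= (gap_weight gg)%:E)%E.
Proof. by rewrite lee_fin mulr_ge0 ?powR_ge0. Qed.

Lemma esum_gap_weight : \esum_(gg in gaps l `*` gaps m) (gap_weight gg)%:E = X%:E.
Proof.
apply: (@esum_mul_setX _ _ _ _ _ (fun g => Q `^ pos_sum c (runs_word l g))
  (fun g => Q `^ pos_sum (1 - c) (runs_word m g))) => [g _|g _||]; rewrite ?powR_ge0 //.
  by rewrite -(esum_gaps_seq_factor _ _ Q01 pl) subrK.
by rewrite -(esum_gaps_seq_factor _ _ Q01 pm) addr0 addrC.
Qed.

Lemma esum_gap_weight_origin :
  \esum_(gg in gaps l `*` gaps m `&` aligned_at_origin l m) (gap_weight gg)%:E =
  (S * X)%:E.
Proof.
rewrite (reindex_esum _ _ _ _ (incr_heads_bij pl pm)).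
transitivity (\esum_(gg in gaps l `*` gaps m) (S%:E * (gap_weight gg)%:E))%E.
  apply: eq_esum => -[g1 g2] [/= s1 s2]; rewrite -EFinM /gap_weight /S /=.
  rewrite !pos_sum_runs_word_incr_head // !gt0_powRD //.
  by congr (_%:E); ring.
by rewrite esumZl ?mulr_ge0 ?powR_ge0 // esum_gap_weight -EFinM.
Qed.

Lemma esum_gap_weight_origin_compl :
  \esum_(gg in gaps l `*` gaps m `&` ~` aligned_at_origin l m) (gap_weight gg)%:E =
  ((1 - S) * X)%:E.
Proof.
have := esumID (aligned_at_origin l m) (gaps l `*` gaps m) (fun gg => (gap_weight gg)%:E)
  (fun gg _ => gap_weight_ge0 gg).
rewrite esum_gap_weight esum_gap_weight_origin addeC.
move=> /(congr1 (fun t => t - (S * X)%:E))%E; rewrite addeK // => <-.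
by rewrite -EFinB; congr (_%:E); ring.
Qed.

Lemma esum_gaps_boltzmann :
  \esum_(gg in gaps l `*` gaps m)
     (boltzmann beta q c (spins (runs_word l gg.1) (runs_word m gg.2)))%:E =
  (run_weight c beta q l m)%:E.
Proof.
set y := expR (- (2 * beta)); set n := (size l + size m)%N.
have q_gt0 : 0 < q by case/andP: q01.
have y_ge0 : 0 <= y by rewrite expR_ge0.
under eq_esum => gg [s1 s2].
  rewrite /boltzmann (expR_Ham_spins_runs beta pl pm s1 s2) (powR_fc_spins c _ _ q_gt0) -/y -/n.
  over.
rewrite (esumID (aligned_at_origin l m)) => [|gg _]; last first.
  by rewrite lee_fin !mulr_ge0 ?exprn_ge0 ?powR_ge0.
transitivity ((y ^+ n * y `^ 2^-1)%:E *
    (\esum_(gg in gaps l `*` gaps m `&` aligned_at_origin l m) (gap_weight gg)%:E) +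
  (y ^+ n * y `^ (- 2^-1))%:E *
    (\esum_(gg in gaps l `*` gaps m `&` ~` aligned_at_origin l m) (gap_weight gg)%:E))%E.
  congr (_ + _)%E; rewrite -esumZl ?mulr_ge0 ?exprn_ge0 ?powR_ge0 //;
    apply: eq_esum => gg [_ at_origin]; rewrite -EFinM.
    by move: at_origin; rewrite /aligned_at_origin /= -negb_or => /negbTE ->.
  by move/negP: at_origin; rewrite /aligned_at_origin /= -negb_or negbK => ->.
rewrite esum_gap_weight_origin esum_gap_weight_origin_compl -!EFinM -EFinD /run_weight.
by congr (_%:E); rewrite /S /X /Q /y /n; ring.
Qed.

End GapPairSums.

Definition run_pairs := [set lm : seq nat * seq nat | all_pos lm.1 /\ all_pos lm.2].

Lemma spins_runs_bij :
  set_bij (run_pairs `*`` fun lm => gaps lm.1 `*` gaps lm.2) configB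
    (fun z => spins (runs_word z.1.1 z.2.1) (runs_word z.1.2 z.2.2)).
Proof.
split.
- by move=> z _; exact: configB_spins.
- move=> [[l m] [gl gm]] [[l' m'] [gl' gm']] /set_mem [/= [pl pm] [/= sl sm]].
  move=> /set_mem [/= [pl' pm'] [/= sl' sm']] /=.
  move=> /(spins_inj (last_true_runs_word pl sl) (last_true_runs_word pm sm)
           (last_true_runs_word pl' sl') (last_true_runs_word pm' sm')) [El Em].
  case: (runs_word_inj pl sl pl' sl' El) => /= -> ->.
  by case: (runs_word_inj pm sm pm' sm' Em) => /= -> ->.
- move=> s /spins_surj [wl [wr [last_l last_r <-]]].
  have [l [gl [pl sl <-]]] := runs_word_surj last_l.
  have [m [gm [pm sm <-]]] := runs_word_surj last_r.
  by exists ((l, m), (gl, gm)).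
Qed.

Section RunWeight.
Variables (R : realType) (c beta q : R).
Hypothesis q01 : 0 < q < 1.

Lemma Zpart_run_weight :
  Zpart beta q c = \esum_(lm in run_pairs) (run_weight c beta q lm.1 lm.2)%:E.
Proof.
have -> : Zpart beta q c = \esum_(s in configB) (boltzmann beta q c s)%:E by [].
rewrite (reindex_esum _ _ _ _ spins_runs_bij) -(esum_esum (a := fun lm gg =>
  (boltzmann beta q c (spins (runs_word lm.1 gg.1) (runs_word lm.2 gg.2)))%:E)).
  by apply: eq_esum => -[l m] [/= pl pm]; exact: esum_gaps_boltzmann.
by move=> lm gg _ _; rewrite lee_fin mulr_ge0 ?expR_ge0 ?powR_ge0.
Qed.

Lemma run_weight_ge0 l m : all_pos l -> all_pos m -> 0 <= run_weight c beta q l m.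
Proof.
move=> pl pm; rewrite -lee_fin -(esum_gaps_boltzmann c beta q01 pl pm) esum_ge0 // => gg _.
by rewrite lee_fin mulr_ge0 ?expR_ge0 ?powR_ge0.
Qed.

Lemma run_weight_nil : run_weight c beta q [::] [::] = expR (- (2 * beta)) `^ 2^-1.
Proof. by rewrite /run_weight /seq_factor !big_ord0 /= expr0 powRr0; ring. Qed.

End RunWeight.

Lemma esum_run_pairs (R : realType) (G : seq nat -> seq nat -> \bar R) :
  (forall l m, all_pos l -> all_pos m -> (0 <= G l m)%E) ->
  \esum_(lm in run_pairs) G lm.1 lm.2 =
  (G [::] [::] +
   \esum_(LR in [set LR : nat * nat | (0 < LR.1 + LR.2)%N])
     \esum_(l in pos_tuples LR.1) \esum_(m in pos_tuples LR.2) G l m)%E.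
Proof.
move=> G_ge0.
rewrite (esumID [set ([::], [::])]) => [|[l m] [/= pl pm]]; last exact: G_ge0.
rewrite (_ : run_pairs `&` _ = [set ([::], [::])]); last first.
  by apply/seteqP; split => [x [] //|x ->]; split.
rewrite esum_set1 ?G_ge0 //; congr (_ + _)%E.
set NZ := [set LR : nat * nat | (0 < LR.1 + LR.2)%N].
set K := fun LR : nat * nat => pos_tuples LR.1 `*`` fun=> pos_tuples LR.2.
transitivity (\esum_(p in NZ `*`` K) G p.2.1 p.2.2); last first.
  rewrite -(esum_esum (a := fun LR lm => G lm.1 lm.2)) => [|LR lm _ [[_ pl] [_ pm]]]; last first.
    exact: G_ge0.
  apply: eq_esum => LR _; rewrite -(esum_esum (a := G)) // => l m [_ pl] [_ pm].
  exact: G_ge0.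
rewrite [RHS](reindex_esum (run_pairs `&` ~` [set ([::], [::])]) _
  (fun lm => ((size lm.1, size lm.2), lm))) //; split.
- move=> [l m] [[/= pl pm] not_nil]; split; last by split; split.
  rewrite /NZ /=; case: l {pl} not_nil => [|a l] not_nil; last by rewrite /= addSn.
  by case: m {pm} not_nil => [|b m] not_nil.
- by move=> lm lm' _ _ [_ _ ->].
- move=> [[L1 L2] [l m]] [/= nz [[/= sl pl] [/= sm pm]]].
  exists (l, m); last by rewrite /= sl sm.
  by split=> [//|[El Em]]; move: nz; rewrite /= -sl -sm El Em.
Qed.

Unset Implicit Arguments.

Theorem corollary4p3 (R : realType) (c beta q : R) :
  0 <= beta -> 0 < q < 1 ->
  let Q := q ^+ 2 in
  let y := expR (- (2 * beta)) in
  Zpart beta q c =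
    ((y `^ (2^-1))%:E +
     \esum_(LR in [set LR : nat * nat | (0 < LR.1 + LR.2)%N])
       \esum_(l in pos_tuples LR.1)
         \esum_(m in pos_tuples LR.2)
           (y ^+ (LR.1 + LR.2) *
            seq_factor Q c (-1) l * seq_factor Q (- c) 0 m *
            (y `^ (- 2^-1) + (y `^ (2^-1) - y `^ (- 2^-1)) *
               Q `^ (sumn l)%:R * Q `^ (sumn m)%:R))%:E)%E.
Proof.
move=> _ q01 Q y.
rewrite (Zpart_run_weight c beta q01).
rewrite (esum_run_pairs (G := fun l m => (run_weight c beta q l m)%:E)) => [|l m pl pm]; last first.
  by rewrite lee_fin (run_weight_ge0 c beta q01 pl pm).
rewrite run_weight_nil; congr (_ + _)%E.
apply: eq_esum => LR _; apply: eq_esum => l [sl _]; apply: eq_esum => m [sm _].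
by rewrite /run_weight sl sm.
Qed.
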